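(* Let $n\ge4$, let $c,\gamma\in\mathbb{F}_{2^n}\setminus\{0,1\}$, and let $F=\mathrm{Inv}\circ(0,1,\gamma)$. Then $3\le{}_c\Delta_F\le5$.
   Context: $\mathrm{Inv}(x)=x^{2^n-2}$ on $\mathbb{F}_{2^n}$. $(0,1,\gamma)$ is the $3$-cycle sending $0\mapsto1$, $1\mapsto\gamma$, $\gamma\mapsto0$ and fixing all other elements; thus $F(0)=1$, $F(1)=\gamma^{-1}$, $F(\gamma)=0$ and $F(x)=x^{-1}$ otherwise. For $c\in\mathbb{F}_{2^n}$, ${}_cD_aF(x)=F(x+a)+cF(x)$; ${}_c\Delta_F(a,b)$ is the number of $x\in\mathbb{F}_{2^n}$ with ${}_cD_aF(x)=b$; and ${}_c\Delta_F=\max\{{}_c\Delta_F(a,b): a,b\in\mathbb{F}_{2^n},\ a\neq 0 \text{ if } c=1\}$. *)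

From HB Require Import structures.
From mathcomp Require Import all_boot all_order all_algebra all_fingroup all_field.
Set Implicit Arguments. Unset Strict Implicit. Unset Printing Implicit Defensive.
Import GRing.Theory.
Local Open Scope ring_scope.

(* The field F_{2^n} is represented by an arbitrary finite field K with #|K| = 2^n
   (unique up to isomorphism). *)

(* Inv(x) = x^(2^n-2), i.e. x^{-1} for x <> 0 and 0 for x = 0;
   MathComp's field inverse satisfies 0^-1 = 0. *)
Definition Inv (K : fieldType) (x : K) : K := x^-1.

Definition cyc3 (K : fieldType) (g : K) (x : K) : K :=
  if x == 0 then 1 else if x == 1 then g else if x == g then 0 else x.

Definition Fswap (K : fieldType) (g : K) (x : K) : K := Inv (cyc3 g x).

Definition cDiff (K : finFieldType) (F : K -> K) (c a x : K) : K := F (x + a) + c * F x.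

Definition cDeltaAB (K : finFieldType) (F : K -> K) (c a b : K) : nat :=
  #|[set x : K | cDiff F c a x == b]|.

Definition cDelta (K : finFieldType) (F : K -> K) (c : K) : nat :=
  \max_(ab : K * K | (c != 1) || (ab.1 != 0)) cDeltaAB F c ab.1 ab.2.

From HB Require Import structures.
From mathcomp Require Import all_boot all_order all_algebra all_fingroup all_field.
From mathcomp Require Import ring zify.
Set Implicit Arguments. Unset Strict Implicit. Unset Printing Implicit Defensive.
Import GRing.Theory.
Local Open Scope ring_scope.

(* Off the support {0, 1, g} of the 3-cycle, F is the inversion,
   and clearing denominators turns F (x + a) + c F x = b into a nonzero
   quadratic (this uses c <> 1 = -1), so at most two solutions have both x and
   x + a off the support.  Every other solution is sent into the support by
   x |-> whichever of x, x + a lies in it; this map is injective because, F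
   being injective, c <> 1 and the characteristic 2, x and x + a are never both
   solutions.  Hence at most 3 + 2 solutions.  For a parameter t, an explicit pair (a, b) has the three
   solutions g, x1, x2 as soon as t avoids the roots of 13 polynomials of total
   degree 22, which is possible when |K| >= 32.  For |K| = 16, K is isomorphic
   to F_2[r]/(r^4 + r + 1), where the bound is checked by computation. *)

Lemma size_le_card (T : finType) (A : {pred T}) (s : seq T) :
  uniq s -> {subset s <= A} -> (size s <= #|A|)%N.
Proof. by move=> s_uniq sA; rewrite cardE uniq_leq_size // => x /sA; rewrite mem_enum. Qed.

Lemma card_roots_lt_size (R : finIdomainType) (p : {poly R}) (A : {pred R}) :
  p != 0 -> {in A, forall x, root p x} -> (#|A| < size p)%N.
Proof.
move=> p0 Ap; rewrite cardE max_poly_roots ?enum_uniq //.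
by apply/allP => x; rewrite mem_enum => /Ap.
Qed.

Lemma Poly_neq0 (R : nzSemiRingType) (s : seq R) :
  has (fun a => a != 0) s -> Poly s != 0.
Proof.
case/hasP => a a_s; apply: contra_neq => s0.
by rewrite -(nth_index 0 a_s) -coef_Poly s0 coef0.
Qed.

Lemma exists_common_nonroot (R : finIdomainType) (ps : seq {poly R}) :
  all (fun p => p != 0) ps -> (\sum_(p <- ps) (size p).-1 < #|R|)%N ->
  exists t, all (fun p => ~~ root p t) ps.
Proof.
move=> ps_nz ps_small; pose P := \prod_(p <- ps) p.
have P_nz : P != 0 by rewrite prodf_seq_neq0.
have size_P : ((size P).-1 <= \sum_(p <- ps) (size p).-1)%N.
  rewrite /P {ps_nz ps_small P P_nz}; elim: ps => [|p ps IH].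
    by rewrite big_nil size_poly1.
  by rewrite !big_cons; move: IH (size_polyMleq p (\prod_(q <- ps) q)); lia.
have [t Pt] : exists t, ~~ root P t.
  apply/existsP; rewrite -negb_forall; apply: contraL ps_small => /forallP P_roots.
  have lt_card := card_roots_lt_size (A := R) P_nz (fun x _ => P_roots x).
  by rewrite -leqNgt (leq_trans _ size_P) // -ltnS (ltn_predK lt_card).
exists t; move: Pt; rewrite rootE horner_prod prodf_seq_neq0.
by apply: sub_all => p; rewrite rootE.
Qed.

Lemma exists_common_nonroot_seq (R : finIdomainType) (qs : seq (seq R)) :
  all (has (fun a => a != 0)) qs -> (\sum_(q <- qs) (size q).-1 < #|R|)%N ->
  exists t, all (fun q => horner_rec q t != 0) qs.
Proof.
move=> qs_nz qs_small.
have ps_nz : all (fun p => p != 0) (map Poly qs).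
  by rewrite all_map; apply: sub_all qs_nz => q /Poly_neq0.
have ps_small : (\sum_(p <- map Poly qs) (size p).-1 < #|R|)%N.
  rewrite big_map (leq_ltn_trans _ qs_small) // leq_sum // => q _.
  by rewrite -!subn1 leq_sub2r ?size_Poly.
have [t] := exists_common_nonroot ps_nz ps_small.
rewrite all_map => t_ok; exists t.
by apply: sub_all t_ok => q; rewrite /= rootE horner_Poly.
Qed.

Section Permutation.
Variables (K : fieldType) (g : K).
Hypotheses (g0 : g != 0) (g1 : g != 1).

Lemma cyc3_inj : injective (cyc3 g).
Proof.
apply: (can_inj (g := cyc3 g \o cyc3 g)) => x /=.
have neqs := (oner_eq0 K, negbTE g0, negbTE g1, eq_sym g 0, eq_sym g 1).
rewrite /cyc3; have [->|x0] := eqVneq x 0; first by rewrite ?(eqxx, neqs).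
have [->|x1] := eqVneq x 1; first by rewrite ?(eqxx, neqs).
have [->|xg] := eqVneq x g; first by rewrite ?(eqxx, neqs).
by rewrite ?(negbTE x0, negbTE x1, negbTE xg).
Qed.

Lemma Fswap_inj : injective (Fswap g).
Proof. by move=> x y /invr_inj /cyc3_inj. Qed.

Lemma Fswap_g : Fswap g g = 0.
Proof. by rewrite /Fswap /Inv /cyc3 (negbTE g0) (negbTE g1) eqxx invr0. Qed.

Lemma Fswap_off x : x \notin [:: 0; 1; g] -> Fswap g x = x^-1.
Proof.
by rewrite !inE /Fswap /Inv /cyc3 => /norP[/negbTE -> /norP[/negbTE -> /negbTE ->]].
Qed.

End Permutation.

Lemma card_cDiff_Inv_le2 (K : finFieldType) (c a b : K) : c != -1 ->
  (#|[pred x : K | ([&& x != 0, x + a != 0 & cDiff (@Inv K) c a x == b])%R]| <= 2)%N.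
Proof.
move=> cN1; pose p := Poly [:: - (c * a); b * a - 1 - c; b].
have p_nz : p != 0.
  apply: Poly_neq0; have [-> | b0] := eqVneq b 0; last by rewrite /= b0 !orbT.
  by rewrite /= mul0r sub0r -opprD !oppr_eq0 addrC addr_eq0 cN1 orbT.
set A := (X in #|X|).
suff A_roots : {in A, forall x, root p x}.
  exact: leq_trans (card_roots_lt_size p_nz A_roots) (size_Poly _).
move=> x; rewrite inE rootE horner_Poly /cDiff /Inv => /and3P[x0 xa0 /eqP <-] /=.
by apply/eqP; field; rewrite x0 xa0.
Qed.

Section CharTwo.
Variables (K : finFieldType) (g c : K).
Hypotheses (ch2 : 2 \in [pchar K]) (g0 : g != 0) (g1 : g != 1) (c0 : c != 0) (c1 : c != 1).

Lemma cDiff_addr_neq (F : K -> K) a x : injective F -> a != 0 ->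
  cDiff F c a (x + a) != cDiff F c a x.
Proof.
move=> F_inj; apply: contra_neq; rewrite /cDiff -addrA addrr_pchar2 // addr0 => eq_shift.
have : (F x - F (x + a)) * (1 - c) = F x + c * F (x + a) - (F (x + a) + c * F x).
  by ring.
rewrite eq_shift subrr => /eqP; rewrite mulf_eq0 !subr_eq0 [1 == c]eq_sym (negbTE c1) orbF.
by move/eqP/F_inj/(congr1 (fun y => y - x))/esym; rewrite subrr (addrC x a) addrK.
Qed.

Lemma card_cDiff_near_le (F : K -> K) (S : seq K) a b : injective F ->
  (#|[pred x | ((cDiff F c a x == b) && ((x \in S) || (x + a \in S)))%R]| <= size S)%N.
Proof.
move=> F_inj; set A := [pred x | _].
pose phi x := if x \in S then x else x + a.
have phi_inj : {in A &, injective phi}.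
  move=> x y /andP[/eqP hx _] /andP[/eqP hy _]; rewrite /phi.
  have [-> | a0] := eqVneq a 0; first by rewrite !addr0; do 2 case: ifP.
  case: ifP => _; case: ifP => _ xy //; last exact: addIr xy.
  - by move: (cDiff_addr_neq y F_inj a0); rewrite -xy hy hx eqxx.
  - by move: (cDiff_addr_neq x F_inj a0); rewrite xy hy hx eqxx.
rewrite -(card_in_image phi_inj) (leq_trans _ (card_size S)) //.
apply: subset_leq_card; apply/subsetP => y.
by case/imageP => x /andP[_ near] ->; rewrite /phi; case: ifP near.
Qed.

Local Notation F := (Fswap g).
Local Notation S := [:: 0; 1; g].

Lemma cDeltaAB_Fswap_le5 a b : (cDeltaAB F c a b <= 5)%N.
Proof.
have cN1 : c != -1 by rewrite oppr_pchar2.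
rewrite /cDeltaAB -(cardsID [set x | (x \in S) || (x + a \in S)]) -[5%N]/(3 + 2)%N.
apply: leq_add.
  apply: leq_trans _ (card_cDiff_near_le S a b (Fswap_inj g0 g1)).
  by apply: subset_leq_card; apply/subsetP => x; rewrite !inE.
apply: leq_trans _ (card_cDiff_Inv_le2 a b cN1); apply: subset_leq_card.
apply/subsetP => x; rewrite in_setD !in_set => /andP[/norP[xS xaS] /eqP <-].
rewrite inE /cDiff !Fswap_off // /Inv eqxx andbT.
by move: xS xaS; rewrite !inE => /norP[-> _] /norP[-> _].
Qed.

Lemma frac_notin_supp N D : D != 0 -> N != 0 -> N != D -> N != g * D -> N / D \notin S.
Proof.
move=> D0 N0 ND NgD; rewrite !inE mulf_eq0 invr_eq0 (negbTE N0) (negbTE D0).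
by rewrite !(can2_eq (divfK D0) (mulfK D0)) mul1r (negbTE ND) (negbTE NgD).
Qed.

(* With D = 1 + c t + c t^2, a = g (1 + t) (1 + c t) / D and b = D / (g t), the
   solutions are g (as F g = 0 and g + a = v := g t / D) and the two roots
   x1 = g c t (1 + t) / D, x2 = g (1 + c t) / D of 1 / (x + a) + c / x = b, for
   which x1 + a = u := g (1 + t) / D and x2 + a = w := g t (1 + c t) / D.  The
   hypotheses make x1 <> x2 and keep v, x1, u, x2, w off {0, 1, g}. *)
Section Parametrization.
Variable t : K.
Local Notation D := (1 + c * t + c * t ^+ 2).
Hypotheses (t0 : t != 0) (t1 : 1 + t != 0) (ct1 : 1 + c * t != 0) (D0 : D != 0).
Hypothesis x1_neq_x2 : c * t * (1 + t) != 1 + c * t.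
Hypotheses (v_neq1 : g * t != D) (v_neqg : t != D) (x1_neq1 : g * c * t * (1 + t) != D).
Hypotheses (u_neq1 : g * (1 + t) != D) (u_neqg : 1 + t != D).
Hypotheses (x2_neq1 : g * (1 + c * t) != D).
Hypotheses (w_neq1 : g * t * (1 + c * t) != D) (w_neqg : t * (1 + c * t) != D).

Lemma cDeltaAB_param_ge3 :
  (3 <= cDeltaAB F c (g * (1 + t) * (1 + c * t) / D) (D / (g * t)))%N.
Proof.
have h2 : 2%:R = 0 :> K := pcharf0 ch2.
set a := _ / D; set x1 := g * c * t * (1 + t) / D; set x2 := g * (1 + c * t) / D.
have ga : g + a = g * t / D by apply: (mulIf D0); rewrite mulrDl !divfK //; ring: h2.
have x1a : x1 + a = g * (1 + t) / D.
  by apply: (mulIf D0); rewrite mulrDl !divfK //; ring: h2.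
have x2a : x2 + a = g * t * (1 + c * t) / D.
  by apply: (mulIf D0); rewrite mulrDl !divfK //; ring: h2.
have v_off : g * t / D \notin S.
  by apply: frac_notin_supp; rewrite ?mulf_neq0 ?(inj_eq (mulfI g0)).
have x1_off : x1 \notin S.
  apply: frac_notin_supp; rewrite ?mulf_neq0 //.
  by rewrite -subr_eq0 (_ : _ - _ = - g) ?oppr_eq0 //; ring.
have x1a_off : x1 + a \notin S.
  by rewrite x1a; apply: frac_notin_supp; rewrite ?mulf_neq0 ?(inj_eq (mulfI g0)).
have x2_off : x2 \notin S.
  apply: frac_notin_supp; rewrite ?mulf_neq0 ?(inj_eq (mulfI g0)) //.
  by rewrite -subr_eq0 (_ : _ - _ = - (c * t ^+ 2)) ?oppr_eq0 ?mulf_neq0 ?expf_neq0 //; ring.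
have x2a_off : x2 + a \notin S.
  by rewrite x2a; apply: frac_notin_supp; rewrite ?mulf_neq0 // -mulrA (inj_eq (mulfI g0)).
have off_neq_g y : y \notin S -> g != y.
  by rewrite !inE => /norP[_ /norP[_]]; rewrite eq_sym.
have sol x : x \notin S -> x + a \notin S -> (x + a)^-1 + c * x^-1 = D / (g * t) ->
    cDiff F c a x == D / (g * t).
  by move=> xS xaS e; rewrite /cDiff !Fswap_off // e.
apply: (size_le_card (s := [:: g; x1; x2])).
  rewrite /= !inE !negb_or !off_neq_g //= andbT /x1 /x2 (inj_eq (mulIf (invr_neq0 D0))).
  by rewrite -!mulrA (inj_eq (mulfI g0)) !mulrA.
move=> x; rewrite !inE => /or3P[] /eqP ->.
- by rewrite /cDiff Fswap_g // (mulr0 c) addr0 ga Fswap_off // invf_div.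
- by apply: sol; rewrite // x1a /x1; field; rewrite ?t0 ?t1 ?D0 ?g0 ?c0.
- by apply: sol; rewrite // x2a /x2; field; rewrite ?t0 ?ct1 ?D0 ?g0 ?c0.
Qed.

End Parametrization.

Lemma exists_cDeltaAB_ge3 : (22 < #|K|)%N -> exists a b, (3 <= cDeltaAB F c a b)%N.
Proof.
move=> K_large.
(* The hypotheses of cDeltaAB_param_ge3, in order, as polynomials in t given by
   their coefficients, constant term first. *)
pose qs := [:: [:: 0; 1]; [:: 1; 1]; [:: 1; c]; [:: 1; c; c]; [:: -1; 0; c];
  [:: -1; g - c; - c]; [:: -1; 1 - c; - c]; [:: -1; g * c - c; g * c - c];
  [:: g - 1; g - c; - c]; [:: 0; 1 - c; - c]; [:: g - 1; g * c - c; - c];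
  [:: -1; g - c; g * c - c]; [:: -1; 1 - c]].
have qs_nz : all (has (fun a => a != 0)) qs by rewrite /= ?oppr_eq0 ?oner_eq0 ?c0 ?orbT.
have qs_small : (\sum_(q <- qs) (size q).-1 < #|K|)%N by rewrite !big_cons big_nil.
have [t /allP t_ok] := exists_common_nonroot_seq qs_nz qs_small.
have nz q e : q \in qs -> horner_rec q t = e -> e != 0.
  by move=> /t_ok + <-.
have neq q N M : q \in qs -> horner_rec q t = N - M -> N != M.
  by move=> q_in /(nz q _ q_in); rewrite subr_eq0.
eexists; eexists; apply: (cDeltaAB_param_ge3 (t := t)).
- by apply: (nz [:: 0; 1]); rewrite ?inE ?eqxx ?orbT //=; ring.
- by apply: (nz [:: 1; 1]); rewrite ?inE ?eqxx ?orbT //=; ring.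
- by apply: (nz [:: 1; c]); rewrite ?inE ?eqxx ?orbT //=; ring.
- by apply: (nz [:: 1; c; c]); rewrite ?inE ?eqxx ?orbT //=; ring.
- by apply: (neq [:: -1; 0; c]); rewrite ?inE ?eqxx ?orbT //=; ring.
- by apply: (neq [:: -1; g - c; - c]); rewrite ?inE ?eqxx ?orbT //=; ring.
- by apply: (neq [:: -1; 1 - c; - c]); rewrite ?inE ?eqxx ?orbT //=; ring.
- by apply: (neq [:: -1; g * c - c; g * c - c]); rewrite ?inE ?eqxx ?orbT //=; ring.
- by apply: (neq [:: g - 1; g - c; - c]); rewrite ?inE ?eqxx ?orbT //=; ring.
- by apply: (neq [:: 0; 1 - c; - c]); rewrite ?inE ?eqxx ?orbT //=; ring.
- by apply: (neq [:: g - 1; g * c - c; - c]); rewrite ?inE ?eqxx ?orbT //=; ring.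
- by apply: (neq [:: -1; g - c; g * c - c]); rewrite ?inE ?eqxx ?orbT //=; ring.
- by apply: (neq [:: -1; 1 - c]); rewrite ?inE ?eqxx ?orbT //=; ring.
Qed.

End CharTwo.

(* (a0, a1, a2, a3) stands for a0 + a1 r + a2 r^2 + a3 r^3 with r^4 = r + 1;
   gf16_mulr is the multiplication by r. *)
Definition gf16 := (bool * bool * bool * bool)%type.

Definition gf16_elems : seq gf16 :=
  let bits := [:: false; true] in
  [seq (u, d) | u <- [seq (v, c) | v <- [seq (a, b) | a <- bits, b <- bits], c <- bits],
                d <- bits].

Definition gf16_zero : gf16 := (false, false, false, false).
Definition gf16_one : gf16 := (true, false, false, false).

Definition gf16_add (u v : gf16) : gf16 :=
  let: (a0, a1, a2, a3) := u in let: (b0, b1, b2, b3) := v in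
  (xorb a0 b0, xorb a1 b1, xorb a2 b2, xorb a3 b3).

Definition gf16_mulr (u : gf16) : gf16 :=
  let: (a0, a1, a2, a3) := u in (a3, xorb a0 a3, a1, a2).

Definition gf16_scale (b : bool) (u : gf16) : gf16 := if b then u else gf16_zero.

Definition gf16_mul (u v : gf16) : gf16 :=
  let: (b0, b1, b2, b3) := v in
  gf16_add (gf16_add (gf16_scale b0 u) (gf16_scale b1 (gf16_mulr u)))
    (gf16_add (gf16_scale b2 (gf16_mulr (gf16_mulr u)))
              (gf16_scale b3 (gf16_mulr (gf16_mulr (gf16_mulr u))))).

Definition gf16_inv (u : gf16) : gf16 :=
  head gf16_zero [seq v <- gf16_elems | gf16_mul u v == gf16_one].

Definition gf16_cyc3 (g x : gf16) : gf16 :=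
  if x == gf16_zero then gf16_one else if x == gf16_one then g
  else if x == g then gf16_zero else x.

Definition gf16_cDiff (g c a x : gf16) : gf16 :=
  gf16_add (gf16_inv (gf16_cyc3 g (gf16_add x a))) (gf16_mul c (gf16_inv (gf16_cyc3 g x))).

Lemma mem_gf16_elems u : u \in gf16_elems.
Proof. by case: u => [[[[] []] []] []]. Qed.

Lemma gf16_add_eq0 u v : gf16_add u v = gf16_zero -> u = v.
Proof. by case: u => [[[[] []] []] []]; case: v => [[[[] []] []] []]. Qed.

Lemma gf16_mulV : all (fun u => (u == gf16_zero) || (gf16_mul u (gf16_inv u) == gf16_one))
  gf16_elems.
Proof. by vm_compute. Qed.

Lemma gf16_cDelta_ge3 : all (fun g => all (fun c =>
    (g \in [:: gf16_zero; gf16_one]) || (c \in [:: gf16_zero; gf16_one]) ||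
    has (fun a => let vals := [seq gf16_cDiff g c a x | x <- gf16_elems] in
      has (fun v => 2 < count (pred1 v) vals)%N vals) gf16_elems)
  gf16_elems) gf16_elems.
Proof. by vm_compute. Qed.

Section Embedding.
Variables (K : finFieldType) (r : K).
Hypotheses (ch2 : 2 \in [pchar K]) (r4 : r ^+ 4 = r + 1).

Definition gf16_emb (u : gf16) : K :=
  let: (a0, a1, a2, a3) := u in a0%:R + a1%:R * r + a2%:R * r ^+ 2 + a3%:R * r ^+ 3.

Let h2 : 2%:R = 0 :> K := pcharf0 ch2.

Lemma natr_xorb (a b : bool) : (xorb a b)%:R = a%:R + b%:R :> K.
Proof. by case: a; case: b => /=; ring: h2. Qed.

Lemma gf16_embD u v : gf16_emb (gf16_add u v) = gf16_emb u + gf16_emb v.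
Proof.
by case: u => [[[a0 a1] a2] a3]; case: v => [[[b0 b1] b2] b3]; rewrite /= !natr_xorb; ring.
Qed.

Lemma gf16_emb0 : gf16_emb gf16_zero = 0.
Proof. by rewrite /= !mul0r !addr0. Qed.

Lemma gf16_emb1 : gf16_emb gf16_one = 1.
Proof. by rewrite /= !mul0r !addr0. Qed.

Lemma gf16_emb_mulr u : gf16_emb (gf16_mulr u) = gf16_emb u * r.
Proof. by case: u => [[[a0 a1] a2] a3]; rewrite /= !natr_xorb; ring: r4. Qed.

Lemma gf16_embM u v : gf16_emb (gf16_mul u v) = gf16_emb u * gf16_emb v.
Proof.
have emb_scale b w : gf16_emb (gf16_scale b w) = b%:R * gf16_emb w.
  by case: b; rewrite /= ?gf16_emb0; ring.
case: v => [[[b0 b1] b2] b3].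
by rewrite /gf16_mul !gf16_embD !emb_scale !gf16_emb_mulr /=; ring.
Qed.

Lemma gf16_emb_eq0 u : (gf16_emb u == 0) = (u == gf16_zero).
Proof.
apply/idP/eqP => [|->]; last by rewrite gf16_emb0.
have /allP/(_ u (mem_gf16_elems u))/orP[/eqP //|/eqP uV] := gf16_mulV.
by move/eqP=> u0; move: (oner_neq0 K); rewrite -gf16_emb1 -uV gf16_embM u0 mul0r eqxx.
Qed.

Lemma gf16_emb_inj : injective gf16_emb.
Proof.
move=> u v e; apply/gf16_add_eq0/eqP.
by rewrite -gf16_emb_eq0 gf16_embD e addrr_pchar2.
Qed.

Lemma gf16_embV u : gf16_emb (gf16_inv u) = (gf16_emb u)^-1.
Proof.
have /allP/(_ u (mem_gf16_elems u))/orP[/eqP ->|/eqP uV] := gf16_mulV.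
  by rewrite gf16_emb0 invr0.
by apply/esym/mulr1_eq; rewrite -gf16_embM uV gf16_emb1.
Qed.

Lemma gf16_emb_cDiff g c a x :
  gf16_emb (gf16_cDiff g c a x) =
  cDiff (Fswap (gf16_emb g)) (gf16_emb c) (gf16_emb a) (gf16_emb x).
Proof.
have emb_cyc3 y : gf16_emb (gf16_cyc3 g y) = cyc3 (gf16_emb g) (gf16_emb y).
  rewrite /gf16_cyc3 /cyc3 -gf16_emb0 -gf16_emb1 !(inj_eq gf16_emb_inj).
  by do 3 case: ifP => _ //.
by rewrite /cDiff /Fswap /Inv gf16_embD gf16_embM !gf16_embV !emb_cyc3 gf16_embD.
Qed.

End Embedding.

Lemma exists_root_X4X1 (K : finFieldType) :
  2 \in [pchar K] -> #|K| = 16%N -> exists r : K, r ^+ 4 = r + 1.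
Proof.
move=> ch2 K16; have h2 : 2%:R = 0 :> K := pcharf0 ch2.
have [/existsP[r /eqP r4]|/existsPn no_root] := boolP [exists r : K, r ^+ 4 == r + 1].
  by exists r.
(* In characteristic 2, (X^4 + X + 1) q = X^16 + X vanishes on K, and q has at
   most 12 roots. *)
pose q := [:: 0; 1; 1; 1; 1; 0; 1; 0; 1; 1; 0; 0; 1] : seq K.
have q_nz : Poly q != 0 by apply: Poly_neq0; rewrite /= oner_eq0 ?orbT.
have q_roots : {in K, forall y, root (Poly q) y}.
  move=> y _; have : (y ^+ 4 + y + 1) * (Poly q).[y] = y ^+ 16 + y.
    by rewrite horner_Poly /q /=; ring: h2.
  rewrite -{1}K16 expf_card addrr_pchar2 // => /eqP; rewrite mulf_eq0 rootE => /orP[|//].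
  by rewrite -addrA addr_eq0 oppr_pchar2 // (negbTE (no_root y)).
by have := card_roots_lt_size q_nz q_roots; rewrite K16 ltnNge (leq_trans (size_Poly _)).
Qed.

Lemma exists_cDeltaAB_ge3_16 (K : finFieldType) (g c : K) :
  2 \in [pchar K] -> #|K| = 16%N -> g != 0 -> g != 1 -> c != 0 -> c != 1 ->
  exists a b, (3 <= cDeltaAB (Fswap g) c a b)%N.
Proof.
move=> ch2 K16 g0 g1 c0 c1; have [r r4] := exists_root_X4X1 ch2 K16.
have emb_inj := gf16_emb_inj ch2 r4.
have [f embK fK] : bijective (gf16_emb r).
  by apply: inj_card_bij emb_inj _; rewrite K16 !card_prod !card_bool.
have /allP/(_ (f c) (mem_gf16_elems _)) := allP gf16_cDelta_ge3 (f g) (mem_gf16_elems _).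
rewrite !inE -!(inj_eq emb_inj) (gf16_emb0 r) (gf16_emb1 r) !fK.
rewrite (negbTE g0) (negbTE g1) (negbTE c0) (negbTE c1) !orFb.
case/hasP => a _ /hasP[_ /mapP[x _ ->] many].
set b := gf16_cDiff _ _ a x in many.
exists (gf16_emb r a), (gf16_emb r b).
apply: leq_trans many _; rewrite count_map -size_filter -(size_map (gf16_emb r)).
apply: size_le_card; first by rewrite (map_inj_uniq emb_inj) filter_uniq.
move=> z /mapP[y]; rewrite mem_filter => /andP[/eqP yb _] ->.
by rewrite inE -{1}(fK g) -{1}(fK c) -(gf16_emb_cDiff ch2 r4) yb.
Qed.

Theorem mainTheorem6 (K : finFieldType) (n : nat) (c g : K) :
  (4 <= n)%N -> #|K| = (2 ^ n)%N ->
  c != 0 -> c != 1 -> g != 0 -> g != 1 ->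
  (3 <= cDelta (Fswap g) c <= 5)%N.
Proof.
move=> n_ge4 K_card c0 c1 g0 g1.
have ch2 : 2 \in [pchar K] by apply: card_finPcharP K_card _.
apply/andP; split; last first.
  by apply/bigmax_leqP => ab _; apply: cDeltaAB_Fswap_le5.
have [a [b ab_ge3]] : exists a b, (3 <= cDeltaAB (Fswap g) c a b)%N.
  move: n_ge4; rewrite leq_eqVlt => /predU1P[n4 | n_gt4].
    by apply: exists_cDeltaAB_ge3_16; rewrite // K_card -n4.
  by apply: exists_cDeltaAB_ge3; rewrite // K_card (@leq_trans (2 ^ 5)) // leq_exp2l.
apply: leq_trans ab_ge3 _.
by apply: (leq_bigmax_cond (F := fun ab : K * K => cDeltaAB _ c ab.1 ab.2) (a, b)); rewrite c1.
Qed.
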